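(* Let $H:\mathbb R\times\mathbb R\times\Omega\to\mathbb R$ satisfy (H1)–(H6) described in the context, fix $x\in\mathbb R$, $\omega\in\Omega$, $\mu>\tilde A(\omega)$, and let $l_\mu=(\mu-\tilde A(\omega))/c$ where $c$ is the Lipschitz constant of $H$ in $p$. Then for all $0\le t\le s$, $$\mathrm{dist}_{\mathcal H}\big(\mathcal R^\omega_{\mu,t},\mathcal R^\omega_{\mu,s}\big)\le\frac{s-t}{l_\mu}.$$
   Context: $H:\mathbb R\times\mathbb R\times\Omega\to\mathbb R$, $(p,y,\omega)\mapsto H(p,y,\omega)$. (H1) $H$ is Lipschitz in $p$ uniformly in $(y,\omega)$, with constant $c$. (H2) There are $c_0,C_0,\gamma>0$ with $-c_0|p+\gamma|\le H(p,y,\omega)\le C_0|p+\gamma|$. (H3) $\lim_{|p|\to\infty}\inf_{(y,\omega)}H(p,y,\omega)=+\infty$. (H4) There is a modulus $w$ with $|H(p,y,\omega)-H(p,x,\omega)|\le w(|x-y|(1+|p|))$. (H5) $p\mapsto H(p,y,\omega)$ is convex. (H6) $H(p,y,\omega)\ge H(0,y,\omega)$. $\tilde A(\omega)=\inf\{\mu:\ \exists v$ globally Lipschitz with $H(Dv,y,\omega)\le\mu$ in $\mathbb R$ (viscosity sense)$\}$. For $x,y\in\mathbb R$: $m_\mu(y,x,\omega)=\sup\{v(y)-v(x):\ v$ globally Lipschitz, $H(Dv,z,\omega)\le\mu$ in $\mathbb R$ in the viscosity sense$\}$. The reachable set is $\mathcal R^\omega_{\mu,t}=\{y\in\mathbb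 R:\ m_\mu(y,x,\omega)\le t\}$, and $\mathrm{dist}_{\mathcal H}(E,F)=\max\{\sup_{y\in F}\inf_{x\in E}|y-x|,\ \sup_{y\in E}\inf_{x\in F}|y-x|\}$ is the Hausdorff distance. *)

From HB Require Import structures.
From mathcomp Require Import all_boot all_order all_algebra.
From mathcomp Require Import all_classical all_reals all_analysis.
Set Implicit Arguments. Unset Strict Implicit. Unset Printing Implicit Defensive.
Import Order.TTheory GRing.Theory Num.Theory.
Import numFieldNormedType.Exports.
Local Open Scope classical_set_scope.
Local Open Scope ring_scope.

Section Defs.
Variables (R : realType) (Omega : Type).
Implicit Types (H : R -> R -> Omega -> R) (v phi : R -> R).

Definition glob_lipschitz v : Prop :=
  exists L : R, forall x y : R, `|v x - v y| <= L * `|x - y|.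

Definition C1 phi : Prop :=
  (forall y : R, derivable phi y 1) /\ continuous (derive1 phi).

Definition visc_subsol H (om : Omega) (mu : R) v : Prop :=
  forall (phi : R -> R) (y0 : R), C1 phi ->
    (\forall y \near y0, v y - phi y <= v y0 - phi y0) ->
    H (derive1 phi y0) y0 om <= mu.

Definition admissible H (om : Omega) (mu : R) : set (R -> R) :=
  [set v | glob_lipschitz v /\ visc_subsol H om mu v].

Definition Atilde H (om : Omega) : \bar R :=
  ereal_inf [set mu%:E | mu in [set mu : R | exists v, admissible H om mu v]].

Definition m_mu H (mu : R) (y x : R) (om : Omega) : \bar R :=
  ereal_sup [set (v y - v x)%:E | v in admissible H om mu].

Definition reach H (mu : R) (x : R) (om : Omega) (t : R) : set R :=
  [set y | (m_mu H mu y x om <= t%:E)%E].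

End Defs.

Definition hdist (R : realType) (E F : set R) : \bar R :=
  Order.max
    (ereal_sup [set ereal_inf [set (`|y - x|)%:E | x in E] | y in F])
    (ereal_sup [set ereal_inf [set (`|y - x|)%:E | x in F] | y in E]).

Definition modulus (R : realType) (w : R -> R) : Prop :=
  w 0 = 0 /\ (forall r, 0 <= r -> 0 <= w r) /\
  {in `[0, +oo[ &, {homo w : a b / a <= b}} /\
  (w r @[r --> 0^'+] --> 0).

From HB Require Import structures.
From mathcomp Require Import all_boot all_order all_algebra.
From mathcomp Require Import all_classical all_reals all_analysis.
From mathcomp Require Import ring lra.
Set Implicit Arguments.
Unset Strict Implicit.
Unset Printing Implicit Defensive.
Import Order.TTheory GRing.Theory Num.Theory.
Import numFieldNormedType.Exports.
Local Open Scope classical_set_scope.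
Local Open Scope ring_scope.

(* A Lipschitz subsolution of H <= mu' can be touched from above by a steep
   parabola at a point as close as we like to any u0; with (H6) and (H4) this
   gives H(0, u0) <= mu', hence H(0, .) <= A~(omega), and by (H1) every slope p
   with |p| <= l_mu satisfies H(p, .) <= mu.

   Now let y be reachable in time s, and move it by d = (s - t) / l_mu towards
   x to a point z (take z = x if |y - x| <= d). For an admissible v, raise it
   to max(v, g) with g a cone issued from (z, v z), of slope l_mu away from x;
   this is still admissible, agrees with v at x and is at least v z + l_mu d at y.
   So v z - v x + (s - t) <= m_mu(y, x) <= s, i.e. z is reachable in time t.
   Reachable sets grow with time, which bounds the Hausdorff distance. *)

Section RealFunctions.
Variable R : realType.
Implicit Types v g : R -> R.

Lemma normr_maxB (a b c d : R) :
  `|Num.max a b - Num.max c d| <= `|a - c| + `|b - d|.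
Proof.
have := ler_norm (a - c); have : - (a - c) <= `|a - c| by rewrite -normrN ler_norm.
have := ler_norm (b - d); have : - (b - d) <= `|b - d| by rewrite -normrN ler_norm.
rewrite !maxEle ler_norml; case: (leP a b); case: (leP c d) => *; apply/andP; split; lra.
Qed.

Lemma glob_lipschitz_continuous v : glob_lipschitz v -> continuous v.
Proof.
move=> [L vL] x; apply/cvgrPdist_le => e e0.
have M0 : 0 < `|L| + 1 by rewrite ltr_wpDl.
apply/nbhs_ballP; exists (e / (`|L| + 1)); first exact: divr_gt0.
move=> y /ltW; rewrite /ball /= ler_pdivlMr // => xy.
apply: le_trans (vL x y) (le_trans _ xy).
by rewrite mulrC ler_wpM2l // (le_trans (ler_norm L)) // lerDl.
Qed.

Lemma glob_lipschitz_max v g : glob_lipschitz v -> glob_lipschitz g ->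
  glob_lipschitz (fun u => Num.max (v u) (g u)).
Proof.
move=> [L vL] [M gM]; exists (L + M) => x y.
by rewrite mulrDl (le_trans (normr_maxB _ _ _ _)) // lerD.
Qed.

Lemma glob_lipschitz_parabola_max v (L u0 r : R) : 0 < r ->
    (forall x y, `|v x - v y| <= L * `|x - y|) ->
  exists2 c, `|c - u0| <= r &
    forall u, v u - `|L| / r * (u - u0) ^+ 2 <= v c - `|L| / r * (c - u0) ^+ 2.
Proof.
move=> r0 vL; set K := `|L| / r.
pose f u := v u - K * (u - u0) ^+ 2.
have f_cont : continuous f.
  move=> u; apply: cvgB; first by apply: glob_lipschitz_continuous; exists L.
  apply: cvgMl_tmp; apply: (continuous_comp (f := fun u => u - u0) (g := fun u => u ^+ 2)).
    by apply: cvgB => //; exact: cvg_cst.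
  exact: exprn_continuous.
have ball_ne : u0 - r <= u0 + r by lra.
have [c c_ball c_max] := EVT_max ball_ne (continuous_subspaceT f_cont).
have in_ball u : `|u - u0| <= r -> u \in `[u0 - r, u0 + r].
  by rewrite ler_distl in_itv.
exists c; first by move: c_ball; rewrite in_itv ler_distl.
move=> u; have [/in_ball|far] := leP `|u - u0| r; first exact: c_max.
apply: le_trans (c_max u0 (in_ball _ _)); last by rewrite subrr normr0 ltW.
rewrite /f subrr expr0n /= mulr0 subr0 -real_normK ?num_real //.
have : v u - v u0 <= `|L| * `|u - u0|.
  by apply: le_trans (ler_norm _) (le_trans (vL _ _) _); rewrite ler_wpM2r ?ler_norm.
have : `|L| * `|u - u0| <= K * `|u - u0| ^+ 2.
  rewrite /K expr2 mulrA ler_wpM2r // -[leLHS](divfK (lt0r_neq0 r0)).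
  by rewrite ler_wpM2l ?divr_ge0 // ltW.
lra.
Qed.

Lemma modulus_small (w : R -> R) : modulus w -> forall e, 0 < e ->
  exists2 d, 0 < d & forall r, 0 <= r < d -> w r <= e.
Proof.
move=> [w0 [_ [_ w_cvg]]] e e0.
move/cvgrPdist_lt: w_cvg => /(_ e e0).
rewrite near_withinE => /nbhs_ballP[d /= d0 w_small].
exists d => // r /andP[]; rewrite le_eqVlt => /predU1P[<- _|r0 rd].
  by rewrite w0 ltW.
have /w_small : ball 0 d r by rewrite /ball /= sub0r normrN gtr0_norm.
by rewrite sub0r normrN => /(_ r0) /(le_lt_trans (ler_norm _)) /ltW.
Qed.
End RealFunctions.

Section Viscosity.
Variables (R : realType) (Omega : Type) (H : R -> R -> Omega -> R) (om : Omega).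
Implicit Types (mu : R) (v g phi : R -> R).

Definition visc_subsol_at mu v (y0 : R) : Prop :=
  forall phi, C1 phi -> (\forall y \near y0, v y - phi y <= v y0 - phi y0) ->
    H (derive1 phi y0) y0 om <= mu.

Lemma visc_subsol_max mu v g : visc_subsol H om mu v ->
    (forall y0, v y0 < g y0 -> visc_subsol_at mu g y0) ->
  visc_subsol H om mu (fun u => Num.max (v u) (g u)).
Proof.
move=> v_sub g_sub phi y0 phi_C1 max_phi.
have touch h : Num.max (v y0) (g y0) = h y0 ->
    (forall y, h y <= Num.max (v y) (g y)) ->
    \forall y \near y0, h y - phi y <= h y0 - phi y0.
  move=> h_y0 h_le; apply: filterS max_phi => y; rewrite h_y0.
  by apply: le_trans; rewrite lerD2r h_le.
have [gv|vg] := leP (g y0) (v y0).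
  apply: v_sub phi_C1 (touch _ _ _) => [|y]; first exact/max_idPl.
  by rewrite le_max lexx.
have /max_idPr max_g := ltW vg.
apply: g_sub vg _ phi_C1 (touch _ max_g _) => y.
by rewrite le_max lexx orbT.
Qed.

Lemma visc_subsol_at_affine mu g (a b y0 : R) : H b y0 om <= mu ->
  (\forall y \near y0, g y = a + b * y) -> visc_subsol_at mu g y0.
Proof.
move=> Hb g_affine phi [phi_d _] max_phi.
have affine_d (y : R) : is_derive y 1 (fun y => a + b * y) b.
  by apply: is_derive_eq; rewrite add0r mul1r; exact: mulr1.
pose psi y := phi y - (a + b * y).
have g_y0 := nbhs_singleton g_affine.
have /nbhs_ballP[e /= e0 psi_min] : \forall y \near y0, psi y0 <= psi y.
  apply: filterS2 max_phi g_affine => y.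
  rewrite g_y0 /psi; lra.
have psi_d0 : is_derive y0 1 psi 0.
  apply: (@derive1_at_min _ psi (y0 - e) (y0 + e)); first lra.
  - by move=> y _; apply: derivableB; [exact: phi_d | case: (affine_d y)].
  - by rewrite in_itv /=; apply/andP; split; lra.
  move=> y; rewrite in_itv /= => /andP[y1 y2]; apply: psi_min.
  by rewrite /ball /= ltr_norml; apply/andP; split; lra.
have phiE : phi = (fun y => psi y + (a + b * y)) by apply/funext => y; rewrite subrK.
have phi_d0 : is_derive y0 1 phi (0 + b) by rewrite phiE; exact: is_deriveD.
by rewrite derive1E derive_val add0r.
Qed.

Lemma visc_subsol_parabola mu v (K u0 c : R) : visc_subsol H om mu v ->
    (forall u, v u - K * (u - u0) ^+ 2 <= v c - K * (c - u0) ^+ 2) ->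
  H (K * (c - u0) *+ 2) c om <= mu.
Proof.
move=> v_sub c_max; pose phi u := K * (u - u0) ^+ 2.
have phi_d (u : R) : is_derive u 1 phi (K * (u - u0) *+ 2).
  by apply: is_derive_eq; rewrite /GRing.scale /= subr0 mulr1 mulr2n mulrDr.
have phi'E : derive1 phi = fun u => K * (u - u0) *+ 2.
  by apply/funext => u; rewrite derive1E; case: (phi_d u).
have -> : K * (c - u0) *+ 2 = derive1 phi c by rewrite phi'E.
apply: v_sub; last by near=> y; exact: c_max.
split; first by move=> u; case: (phi_d u).
rewrite phi'E => u; apply: cvgMn; apply: cvgMl_tmp.
by apply: cvgB => //; exact: cvg_cst.
Unshelve. all: by end_near. Qed.

Variable w : R -> R.
Hypothesis w_modulus : modulus w.
Hypothesis H_modulus :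
  forall p x y, `|H p y om - H p x om| <= w (`|x - y| * (1 + `|p|)).
Hypothesis H_min0 : forall p y, H 0 y om <= H p y om.

Lemma visc_subsol_H0_le mu v u0 : glob_lipschitz v -> visc_subsol H om mu v ->
  H 0 u0 om <= mu.
Proof.
move=> [L vL] v_sub; apply/ler_addgt0Pr => e e0.
have [d d0 w_small] := modulus_small w_modulus e0.
have d2_gt0 : 0 < d / 2 by rewrite divr_gt0.
have [c cu0 c_max] := glob_lipschitz_parabola_max u0 d2_gt0 vL.
have H0c : H 0 c om <= mu := le_trans (H_min0 _ _) (visc_subsol_parabola v_sub c_max).
have := H_modulus 0 c u0; rewrite normr0 addr0 mulr1.
have : w `|c - u0| <= e by apply: w_small; rewrite normr_ge0 /=; lra.
have := ler_norm (H 0 u0 om - H 0 c om); lra.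
Qed.

Lemma H0_le_Atilde u : ((H 0 u om)%:E <= Atilde H om)%E.
Proof.
apply: le_ereal_inf_tmp => _ [mu [v [v_lip v_sub]] <-].
by rewrite lee_fin; exact: visc_subsol_H0_le v_lip v_sub.
Qed.

Lemma H_le_small_slope (c A mu : R) : 0 < c ->
    (forall p q y, `|H p y om - H q y om| <= c * `|p - q|) ->
    (forall y, H 0 y om <= A) ->
  forall p y, `|p| <= (mu - A) / c -> H p y om <= mu.
Proof.
move=> c0 H_lip H0_A p y; rewrite ler_pdivlMr // mulrC => p_small.
have := H_lip p 0 y; rewrite subr0.
have := ler_norm (H p y om - H 0 y om); have := H0_A y; lra.
Qed.
End Viscosity.

Section Cone.
Variables (R : realType) (Omega : Type) (H : R -> R -> Omega -> R) (om : Omega).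
Variables (mu l : R).
Hypothesis l_ge0 : 0 <= l.
Hypothesis H_small_slope : forall p y, `|p| <= l -> H p y om <= mu.
Variables (sg z : R) (v : R -> R) (L : R).
Hypothesis sg_norm : `|sg| = 1.
Hypothesis v_lip : forall x y, `|v x - v y| <= L * `|x - y|.

(* Behind [z] the slope is [l + |L|], which keeps the cone below the
   [L]-Lipschitz [v] there. *)
Definition cone u := v z + l * (sg * (u - z)) - `|L| * Num.max 0 (sg * (z - u)).

Let normr_sgM r : `|sg * r| = `|r|.
Proof. by rewrite normrM sg_norm mul1r. Qed.

Lemma cone_ahead u : 0 <= sg * (u - z) -> cone u = v z + l * (sg * (u - z)).
Proof.
move=> ahead; rewrite /cone.
have /max_idPl -> : sg * (z - u) <= 0 by rewrite -opprB mulrN oppr_le0.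
by rewrite mulr0 subr0.
Qed.

Lemma cone_le u : sg * (u - z) <= 0 -> cone u <= v u.
Proof.
move=> behind; have zu : sg * (z - u) = `|z - u|.
  by rewrite -(normr_sgM (z - u)) ger0_norm // -opprB mulrN oppr_ge0.
have uz : sg * (u - z) = - `|z - u| by rewrite -zu -mulrN opprB.
rewrite /cone zu uz (max_idPr (normr_ge0 _)).
have : L * `|z - u| <= `|L| * `|z - u| by rewrite ler_wpM2r // ler_norm.
have : 0 <= l * `|z - u| by rewrite mulr_ge0.
have := ler_norm (v z - v u); have := v_lip z u; lra.
Qed.

Lemma cone_lipschitz : glob_lipschitz cone.
Proof.
exists (l + `|L|) => a b.
have kink : `|Num.max 0 (sg * (z - a)) - Num.max 0 (sg * (z - b))| <= `|a - b|.
  apply: le_trans (normr_maxB _ _ _ _) _.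
  rewrite subrr normr0 add0r -mulrBr normr_sgM.
  have -> : z - a - (z - b) = b - a by ring.
  by rewrite distrC.
have -> : cone a - cone b = l * (sg * (a - b))
    - `|L| * (Num.max 0 (sg * (z - a)) - Num.max 0 (sg * (z - b))).
  by rewrite /cone; ring.
rewrite mulrDl; apply: le_trans (ler_normB _ _) (lerD _ _).
  by rewrite normrM normr_sgM ger0_norm.
by rewrite normrM normr_id ler_wpM2l.
Qed.

Lemma cone_subsol_at u0 : 0 < sg * (u0 - z) -> visc_subsol_at H om mu cone u0.
Proof.
move=> ahead; apply: (@visc_subsol_at_affine _ _ _ _ _ _ (v z - l * sg * z) (l * sg)).
  by apply: H_small_slope; rewrite normrM sg_norm mulr1 ger0_norm.
have near_ahead : \forall y \near u0, 0 <= sg * (y - z).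
  apply/nbhs_ballP; exists (sg * (u0 - z)) => // y; rewrite /ball /= => y_near.
  have : sg * (u0 - y) <= `|u0 - y| by rewrite -(normr_sgM (u0 - y)) ler_norm.
  have -> : sg * (y - z) = sg * (u0 - z) - sg * (u0 - y) by ring.
  lra.
by apply: filterS near_ahead => y /cone_ahead ->; ring.
Qed.

Lemma cone_max_admissible : visc_subsol H om mu v ->
  admissible H om mu (fun u => Num.max (v u) (cone u)).
Proof.
move=> v_sub; split.
  by apply: glob_lipschitz_max; [exists L | exact: cone_lipschitz].
apply: visc_subsol_max v_sub _ => u0 v_lt_cone; apply: cone_subsol_at.
by rewrite ltNge; apply: contraTN v_lt_cone => /cone_le; rewrite -leNgt.
Qed.

Lemma m_mu_ge_cone x y : visc_subsol H om mu v ->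
    sg * (x - z) <= 0 -> 0 <= sg * (y - z) ->
  ((v z - v x + l * (sg * (y - z)))%:E <= m_mu H mu y x om)%E.
Proof.
move=> v_sub behind ahead; pose W u := Num.max (v u) (cone u).
have W_x : W x = v x by apply/max_idPl; exact: cone_le.
have W_y : v z + l * (sg * (y - z)) <= W y.
  by rewrite /W -cone_ahead // le_max lexx orbT.
apply: (le_trans _ (ereal_sup_ubound _)); last first.
  by exists W => //; exact: cone_max_admissible.
rewrite lee_fin W_x; lra.
Qed.
End Cone.

Section Reachable.
Variables (R : realType) (Omega : Type) (H : R -> R -> Omega -> R) (om : Omega).
Variables (mu x : R).
Local Notation reach := (reach H mu x om).

Lemma reach_mono t s : t <= s -> reach t `<=` reach s.
Proof. by move=> ts y /le_trans; apply; rewrite lee_fin. Qed.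

Lemma reach_start t : 0 <= t -> reach t x.
Proof. by move=> t0; apply: ge_ereal_sup => _ [v _ <-]; rewrite subrr lee_fin. Qed.

Variable l : R.
Hypothesis l_gt0 : 0 < l.
Hypothesis H_small_slope : forall p y, `|p| <= l -> H p y om <= mu.

Lemma reach_approx t s y : 0 <= t <= s -> reach s y ->
  exists2 z, reach t z & `|y - z| <= (s - t) / l.
Proof.
move=> /andP[t0 ts] ys; set d := (s - t) / l.
have [yx_near|yx_far] := leP `|y - x| d; first by exists x => //; exact: reach_start.
have d0 : 0 <= d by rewrite divr_ge0 ?subr_ge0 // ltW.
have ld : l * d = s - t by rewrite mulrC divfK // gt_eqF.
have yx : y - x != 0 by rewrite -normr_gt0 (le_lt_trans d0 yx_far).
set sg := Num.sg (y - x).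
have sg_norm : `|sg| = 1 by rewrite normr_sg yx.
have sg2 : sg * sg = 1 by rewrite -expr2 sqr_sg yx.
have yz : y - (y - sg * d) = sg * d by ring.
exists (y - sg * d); last by rewrite yz normrM sg_norm mul1r ger0_norm.
apply: ge_ereal_sup => _ [v [[L v_lip] v_sub] <-].
have behind : sg * (x - (y - sg * d)) <= 0.
  have -> : sg * (x - (y - sg * d)) = sg * sg * d - sg * (y - x) by ring.
  by rewrite sg2 mul1r -normrEsg subr_le0 ltW.
have ahead : sg * (y - (y - sg * d)) = d by rewrite yz mulrA sg2 mul1r.
have := le_trans (m_mu_ge_cone (ltW l_gt0) H_small_slope sg_norm v_lip v_sub behind _) ys.
rewrite ahead ld !lee_fin => /(_ d0); lra.
Qed.
End Reachable.

Lemma hdist_le_subset (R : realType) (E F : set R) (d : R) : 0 <= d -> E `<=` F ->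
    (forall y, F y -> exists2 z, E z & `|y - z| <= d) ->
  (hdist E F <= d%:E)%E.
Proof.
move=> d0 EF F_near; rewrite /hdist ge_max; apply/andP; split;
  apply: ge_ereal_sup => _ [y yF <-].
  have [z zE yz] := F_near y yF.
  by apply: (@le_trans _ _ (`|y - z|)%:E); [apply: ereal_inf_lbound; exists z | rewrite lee_fin].
apply: (@le_trans _ _ (`|y - y|)%:E); last by rewrite subrr normr0 lee_fin.
by apply: ereal_inf_lbound; exists y => //; exact: EF.
Qed.

Theorem lemma4p10 (R : realType) (Omega : Type) (H : R -> R -> Omega -> R)
    (c c0 C0 gamma : R) (w : R -> R)
    (* (H1) *)
    (Hc : 0 < c)
    (H1 : forall p q y om, `|H p y om - H q y om| <= c * `|p - q|)
    (* (H2) *)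
    (Hc0 : 0 < c0) (HC0 : 0 < C0) (Hgamma : 0 < gamma)
    (H2 : forall p y om,
        - c0 * `|p + gamma| <= H p y om /\ H p y om <= C0 * `|p + gamma|)
    (* (H3) *)
    (H3 : forall M : R, exists K : R, forall p y om,
        K <= `|p| -> M <= H p y om)
    (* (H4) *)
    (Hw : modulus w)
    (H4 : forall p x y om,
        `|H p y om - H p x om| <= w (`|x - y| * (1 + `|p|)))
    (* (H5) *)
    (H5 : forall y om (p q lam : R), 0 <= lam <= 1 ->
        H (lam * p + (1 - lam) * q) y om
          <= lam * H p y om + (1 - lam) * H q y om)
    (* (H6) *)
    (H6 : forall p y om, H 0 y om <= H p y om)
    (x : R) (om : Omega) (mu : R)
    (Afin : Atilde H om \is a fin_num)
    (Hmu : (Atilde H om < mu%:E)%E)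
    (t s : R) (Ht : 0 <= t) (Hts : t <= s) :
  let l_mu := (mu - fine (Atilde H om)) / c in
  (hdist (reach H mu x om t) (reach H mu x om s) <= ((s - t) / l_mu)%:E)%E.
Proof.
cbv zeta; set A := fine (Atilde H om); set l_mu := (mu - A) / c.
have AE : Atilde H om = A%:E by rewrite fineK.
have l_gt0 : 0 < l_mu by rewrite divr_gt0 // subr_gt0 -lte_fin -AE.
have H0_A y : H 0 y om <= A.
  by rewrite -lee_fin -AE; exact: H0_le_Atilde Hw (fun p x y => H4 p x y om) (fun p y => H6 p y om) y.
have H_small_slope := H_le_small_slope Hc (fun p q y => H1 p q y om) H0_A (mu := mu).
apply: hdist_le_subset; first by rewrite divr_ge0 ?subr_ge0 // ltW.
  exact: reach_mono.
by move=> y; apply: reach_approx; rewrite ?Ht.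
Qed.
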